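(* Let $0<\alpha<1$, $\lambda>0$, $C=\frac1\alpha-1$ and $W_{+}(s)=\frac{1}{C}\,\lambda\frac{\sin(\alpha\pi)}{\pi}\frac{s^{\alpha-1}}{s^{2\alpha}-2\lambda s^{\alpha}\cos(\alpha\pi)+\lambda^{2}}$ for $s>0$. Let $u_1,u_2$ be independent random variables uniformly distributed on $(0,1)$, put $v=Cu_1$ and $$\tau=-\Big(\frac1\lambda\Big)^{1/\alpha}\left(\frac{\sin(\alpha\pi(1+2v))-\sin(\alpha\pi)}{\sin(2\alpha\pi(1+v))}\right)^{1/\alpha}\log(u_2).$$ Then $\tau$ is a positive random variable whose survival function is $$\mathbb{P}(\tau>t)=\phi_{W_+}(t):=\int_0^\infty W_{+}(s)\,e^{-st}\,\mathrm{d}s\qquad (t\ge 0).$$ *)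

From Stdlib Require Import Reals Lra ClassicalEpsilon.
Open Scope R_scope.

Definition Cst (alpha : R) : R := 1 / alpha - 1.

Definition W_plus (alpha lambda s : R) : R :=
  (1 / Cst alpha) * lambda * (sin (alpha * PI) / PI) *
  (Rpower s (alpha - 1) /
   (Rpower s (2 * alpha) - 2 * lambda * Rpower s alpha * cos (alpha * PI)
    + lambda ^ 2)).

Definition tau (alpha lambda u1 u2 : R) : R :=
  let v := Cst alpha * u1 in
  - Rpower (1 / lambda) (1 / alpha) *
    Rpower ((sin (alpha * PI * (1 + 2 * v)) - sin (alpha * PI))
            / sin (2 * alpha * PI * (1 + v))) (1 / alpha) *
    ln u2.

Definition RInt_is (f : R -> R) (a b I : R) : Prop :=
  exists pr : Riemann_integrable f a b, RiemannInt pr = I.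

Definition ind2 (E : R -> R -> Prop) (u1 u2 : R) : R :=
  if excluded_middle_informative (0 < u1 < 1 /\ 0 < u2 < 1 /\ E u1 u2)
  then 1 else 0.

(* P(E) = p for (u1,u2) independent uniform on (0,1): the probability is the
   Lebesgue measure of E in the unit square, computed as an iterated
   (Fubini) Riemann integral of the indicator. *)
Definition prob_unif2 (E : R -> R -> Prop) (p : R) : Prop :=
  exists g : R -> R,
    (forall u1, 0 <= u1 <= 1 -> RInt_is (fun u2 => ind2 E u1 u2) 0 1 (g u1)) /\
    RInt_is g 0 1 p.

Definition improper_int_0_inf (f : R -> R) (L : R) : Prop :=
  forall eps, 0 < eps ->
    exists delta M, 0 < delta /\
      forall a b, 0 < a < delta -> M < b ->
        exists pr : Riemann_integrable f a b, Rabs (RiemannInt pr - L) < eps.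

From Pilot Require Import Defs.
From Stdlib Require Import Reals Lra ClassicalEpsilon.
From Coquelicot Require Import Coquelicot.
(* Coquelicot exports a constructor [Cst] that would shadow [Defs.Cst]. *)
Import Defs.
Open Scope R_scope.

(* Given [u1], [tau = K u1 * (- ln u2)] is exponential with rate [S u1 = 1 / K u1], so
   P(tau > t) = int_0^1 exp (- S u * t) du.  With [theta u = alpha PI (1 + C u)] one has
   [S u = (lambda sin theta / sin (theta - alpha PI)) ^ (1 / alpha)], a decreasing bijection
   of (0, 1) onto (0, +oo): solving for [cot theta] gives
   [cot theta = (cos (alpha PI) - lambda / s ^ alpha) / sin (alpha PI)], and the inverse
   [u = (theta / (alpha PI) - 1) / C] has derivative [- W_+].  The substitution [s = S u]
   thus gives int_0^oo W_+ s exp (- s t) ds; as the integrand is bounded by 1, both ends of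
   the improper integral are controlled by the lengths of the cut-off pieces of (0, 1). *)

Lemma RInt_is_of_is_RInt (f : R -> R) a b v : is_RInt f a b v -> RInt_is f a b v.
Proof.
  intros Hf.
  exists (ex_RInt_Reals_0 f a b (ex_intro _ v Hf)).
  rewrite <- RInt_Reals. now apply is_RInt_unique.
Qed.

Lemma is_RInt_const_on (h : R -> R) a b c v : a <= b -> v = (b - a) * c ->
  (forall x, a < x < b -> h x = c) -> is_RInt h a b v.
Proof.
  intros Hab -> Hc. apply is_RInt_ext with (fun _ => c).
  - rewrite Rmin_left, Rmax_right by lra. intros x Hx. symmetry. now apply Hc.
  - exact (is_RInt_const a b c).
Qed.

Lemma is_RInt_step (h : R -> R) a c b : a <= c <= b ->
  (forall x, a < x < c -> h x = 1) -> (forall x, c < x < b -> h x = 0) ->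
  is_RInt h a b (c - a).
Proof.
  intros Hc H1 H0.
  replace (c - a) with (plus (c - a) 0) by (cbn; ring).
  apply (is_RInt_Chasles h a c b).
  - apply (is_RInt_const_on _ _ _ 1); [lra|ring|easy].
  - apply (is_RInt_const_on _ _ _ 0); [lra|ring|easy].
Qed.

Lemma is_RInt_ext_except (f g : R -> R) a b c v : a <= b ->
  (forall x, a < x < b -> x <> c -> f x = g x) -> is_RInt f a b v -> is_RInt g a b v.
Proof.
  intros Hab Hfg Hf.
  assert (Hpiece : forall p q, a <= p <= q -> q <= b -> ~ (p < c < q) ->
            ex_RInt f p q -> is_RInt g p q (RInt f p q)).
  { intros p q Hp Hq Hc Hex. apply is_RInt_ext with f.
    - rewrite Rmin_left, Rmax_right by lra. intros x Hx. apply Hfg; lra.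
    - exact (RInt_correct (V := R_CompleteNormedModule) f p q Hex). }
  destruct (Rlt_dec a c) as [Hac|Hca]; [destruct (Rlt_dec c b) as [Hcb|Hbc]|].
  - pose proof (ex_RInt_Chasles_1 f a c b ltac:(lra) (ex_intro _ v Hf)) as H1.
    pose proof (ex_RInt_Chasles_2 f a c b ltac:(lra) (ex_intro _ v Hf)) as H2.
    rewrite <- (is_RInt_unique f a b v Hf), <- (RInt_Chasles f a c b H1 H2).
    apply (is_RInt_Chasles g a c b); apply Hpiece; auto; lra.
  - rewrite <- (is_RInt_unique f a b v Hf). apply Hpiece; try lra. now exists v.
  - rewrite <- (is_RInt_unique f a b v Hf). apply Hpiece; try lra. now exists v.
Qed.

Lemma ex_RInt_continuous_ext (f h : R -> R) a b : a <= b ->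
  (forall z, a <= z <= b -> continuous h z) -> (forall z, a < z < b -> f z = h z) ->
  ex_RInt f a b.
Proof.
  intros Hab Hh Hfh. apply ex_RInt_ext with h.
  - rewrite Rmin_left, Rmax_right by lra. intros x Hx. symmetry. now apply Hfh.
  - apply (ex_RInt_continuous (V := R_CompleteNormedModule)).
    rewrite Rmin_left, Rmax_right by lra. exact Hh.
Qed.

Lemma continuous_eps_delta (f : R -> R) x :
  (forall eps, 0 < eps -> exists d, 0 < d /\
     forall y, Rabs (y - x) < d -> Rabs (f y - f x) < eps) ->
  continuous f x.
Proof.
  intros H. apply continuity_pt_filterlim. intros eps Heps.
  destruct (H eps Heps) as [d [Hd Hy]]. exists d. split; auto.
  intros y [_ Hyx]. now apply Hy.
Qed.

Lemma locally_pos x : 0 < x -> locally x (fun y => 0 < y).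
Proof.
  intros Hx. exists (mkposreal x Hx). intros y Hy.
  apply Rabs_def2 in Hy. cbn in Hy. lra.
Qed.

Lemma exp_le_exp x y : x <= y -> exp x <= exp y.
Proof.
  intros [Hxy|Hxy]; [left; now apply exp_increasing|now rewrite Hxy; right].
Qed.

Lemma Rpower_le_self x b : 0 < x <= 1 -> 1 <= b -> Rpower x b <= x.
Proof.
  intros Hx Hb. unfold Rpower. rewrite <- (exp_ln x) at 2 by lra.
  assert (ln x <= 0) by (rewrite <- ln_1; apply ln_le; lra).
  apply exp_le_exp; nra.
Qed.

(* For [x <= 0], [Rpower x b] is the junk value [exp (b * ln x) = exp 0 = 1]. *)
Definition Rpower0 (b x : R) : R := if Rle_dec x 0 then 0 else Rpower x b.

Definition exp_neg_inv (t x : R) : R := if Rle_dec x 0 then 0 else exp (- (t / x)).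

Lemma Rpower0_nonneg b x : 0 <= Rpower0 b x.
Proof. unfold Rpower0. destruct (Rle_dec x 0); [lra|left; apply exp_pos]. Qed.

Lemma Rpower0_pos b x : 0 < x -> Rpower0 b x = Rpower x b.
Proof. intros Hx. unfold Rpower0. destruct (Rle_dec x 0); [lra|easy]. Qed.

Lemma Rpower0_nonpos b x : x <= 0 -> Rpower0 b x = 0.
Proof. intros Hx. unfold Rpower0. destruct (Rle_dec x 0); [easy|lra]. Qed.

Lemma continuous_Rpower0 b x : 1 <= b -> 0 <= x -> continuous (Rpower0 b) x.
Proof.
  intros Hb [Hx|<-].
  - apply continuous_ext_loc with (fun y => Rpower y b).
    + apply (filter_imp (fun y => 0 < y)); [|now apply locally_pos].
      intros y Hy. now rewrite Rpower0_pos.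
    + apply (ex_derive_continuous (V := R_NormedModule)). unfold Rpower. auto_derive. lra.
  - apply continuous_eps_delta. intros eps Heps. exists (Rmin 1 eps).
    split; [apply Rmin_pos; lra|]. intros y Hy.
    rewrite Rminus_0_r in Hy. rewrite (Rpower0_nonpos b 0), Rminus_0_r by lra.
    unfold Rpower0. destruct (Rle_dec y 0) as [_|Hy0]; [rewrite Rabs_R0; lra|].
    apply Rnot_le_lt in Hy0. rewrite Rabs_pos_eq in Hy by lra.
    pose proof (Rmin_l 1 eps). pose proof (Rmin_r 1 eps).
    pose proof (Rpower_le_self y b ltac:(lra) Hb).
    rewrite Rabs_pos_eq by (left; apply exp_pos). lra.
Qed.

Lemma exp_neg_inv_pos t x : 0 < x -> exp_neg_inv t x = exp (- (t / x)).
Proof. intros Hx. unfold exp_neg_inv. destruct (Rle_dec x 0); [lra|easy]. Qed.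

Lemma continuous_exp_neg_inv t x : 0 < t -> 0 <= x -> continuous (exp_neg_inv t) x.
Proof.
  intros Ht [Hx|<-].
  - apply continuous_ext_loc with (fun y => exp (- (t / y))).
    + apply (filter_imp (fun y => 0 < y)); [|now apply locally_pos].
      intros y Hy. now rewrite exp_neg_inv_pos.
    + apply (ex_derive_continuous (V := R_NormedModule)). auto_derive. lra.
  - apply continuous_eps_delta. intros eps Heps. exists (eps * t).
    split; [nra|]. intros y Hy.
    rewrite Rminus_0_r in Hy. unfold exp_neg_inv at 2.
    destruct (Rle_dec 0 0) as [_|]; [rewrite Rminus_0_r|lra].
    unfold exp_neg_inv. destruct (Rle_dec y 0) as [_|Hy0]; [rewrite Rabs_R0; lra|].
    apply Rnot_le_lt in Hy0. rewrite Rabs_pos_eq in Hy by lra.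
    rewrite Rabs_pos_eq by (left; apply exp_pos).
    (* [exp (t / y) > 1 + t / y > t / y], hence [exp (- (t / y)) < y / t] *)
    assert (Hexp : t / y < exp (t / y)).
    { pose proof (exp_ineq1 (t / y)).
      assert (0 < t / y) by (apply Rdiv_lt_0_compat; lra). lra. }
    rewrite exp_Ropp. apply Rlt_trans with (y / t).
    + replace (y / t) with (/ (t / y)) by (field; lra).
      apply Rinv_lt_contravar; [|exact Hexp].
      apply Rmult_lt_0_compat; [apply Rdiv_lt_0_compat; lra|apply exp_pos].
    + apply (Rmult_lt_reg_r t); [lra|]. unfold Rdiv. rewrite Rmult_assoc, Rinv_l; lra.
Qed.

Section ImproperChangeOfVariables.

Variables (f g phi psi : R -> R) (I : R).
Hypothesis f_int : is_RInt f 0 1 I.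
Hypothesis f_bound : forall u, Rabs (f u) <= 1.
Hypothesis phi_bounds : forall s, 0 < s -> 0 < phi s < 1.
Hypothesis phi_decreasing : forall s1 s2, 0 < s1 < s2 -> phi s2 < phi s1.
Hypothesis psi_pos : forall u, 0 < u < 1 -> 0 < psi u.
Hypothesis phi_psi : forall u, 0 < u < 1 -> phi (psi u) = u.
Hypothesis g_change : forall a b, 0 < a < b -> is_RInt g a b (RInt f (phi b) (phi a)).

Lemma Rabs_RInt_sub_le p q : 0 <= p <= q -> q <= 1 -> Rabs (RInt f p q - I) <= p + (1 - q).
Proof.
  intros Hp Hq.
  assert (H01 : ex_RInt f 0 1) by now exists I.
  assert (H0q : ex_RInt f 0 q) by (apply (ex_RInt_Chasles_1 f 0 q 1); auto; lra).
  assert (Hq1 : ex_RInt f q 1) by (apply (ex_RInt_Chasles_2 f 0 q 1); auto; lra).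
  assert (H0p : ex_RInt f 0 p) by (apply (ex_RInt_Chasles_1 f 0 p q); auto; lra).
  assert (Hpq : ex_RInt f p q) by (apply (ex_RInt_Chasles_2 f 0 p q); auto; lra).
  assert (Hsplit : I = RInt f 0 p + RInt f p q + RInt f q 1).
  { rewrite <- (is_RInt_unique f 0 1 I f_int).
    rewrite <- (RInt_Chasles f 0 q 1), <- (RInt_Chasles f 0 p q) by easy.
    cbn. unfold plus. cbn. ring. }
  assert (Hbound : forall x y, 0 <= x <= y -> y <= 1 -> ex_RInt f x y ->
            Rabs (RInt f x y) <= y - x).
  { intros x y Hx Hy Hxy. rewrite <- (Rmult_1_r (y - x)).
    apply abs_RInt_le_const; auto; lra. }
  pose proof (Hbound 0 p ltac:(lra) ltac:(lra) H0p).
  pose proof (Hbound q 1 ltac:(lra) ltac:(lra) Hq1).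
  rewrite Hsplit.
  replace (RInt f p q - (RInt f 0 p + RInt f p q + RInt f q 1))
    with (- (RInt f 0 p + RInt f q 1)) by ring.
  rewrite Rabs_Ropp. eapply Rle_trans; [apply Rabs_triang|lra].
Qed.

Lemma improper_int_0_inf_change : improper_int_0_inf g I.
Proof.
  intros eps Heps.
  set (e := Rmin (eps / 3) (1 / 4)).
  assert (He : 0 < e <= eps / 3 /\ e <= 1 / 4)
    by (pose proof (Rmin_l (eps / 3) (1 / 4)); pose proof (Rmin_r (eps / 3) (1 / 4));
        pose proof (Rmin_pos (eps / 3) (1 / 4)); unfold e; lra).
  exists (psi (1 - e)), (psi e). split; [apply psi_pos; lra|].
  intros a b Ha Hb.
  assert (Hpa : 1 - e < phi a)
    by (rewrite <- (phi_psi (1 - e)) by lra; apply phi_decreasing; lra).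
  pose proof (psi_pos e ltac:(lra)).
  assert (Hpb : phi b < e)
    by (rewrite <- (phi_psi e) by lra; apply phi_decreasing; lra).
  assert (Hab : a < b).
  { destruct (Rlt_le_dec a b) as [|[Hba|Hba]]; auto; exfalso.
    - pose proof (phi_decreasing b a ltac:(lra)). lra.
    - subst b. lra. }
  pose proof (g_change a b ltac:(lra)) as Hg.
  exists (ex_RInt_Reals_0 g a b (ex_intro _ _ Hg)).
  rewrite <- RInt_Reals, (is_RInt_unique g a b _ Hg).
  pose proof (phi_bounds a ltac:(lra)). pose proof (phi_bounds b ltac:(lra)).
  eapply Rle_lt_trans; [apply Rabs_RInt_sub_le; lra|lra].
Qed.

End ImproperChangeOfVariables.

Lemma Rpower_Rinv x p : 0 < x -> Rpower (/ x) p = / Rpower x p.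
Proof.
  intros Hx. unfold Rpower. rewrite ln_Rinv, <- exp_Ropp by lra. f_equal. ring.
Qed.

Lemma Rpower_Rpower_inv x p : 0 < x -> p <> 0 -> Rpower (Rpower x p) (/ p) = x.
Proof.
  intros Hx Hp. rewrite Rpower_mult, Rinv_r, Rpower_1 by easy. reflexivity.
Qed.

(* [sin (2 T - A) - sin A = 2 cos T sin (T - A)] and [sin (2 T) = 2 sin T cos T]. *)
Lemma sin_2a_sub_ratio T A : sin T <> 0 -> cos T <> 0 ->
  (sin (2 * T - A) - sin A) / sin (2 * T) = sin (T - A) / sin T.
Proof.
  intros Hs Hc.
  rewrite sin_minus, sin_2a, cos_2a, sin_minus.
  pose proof (sin2_cos2 T) as Hsc. unfold Rsqr in Hsc.
  field_simplify; [|easy|easy].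
  replace (sin T ^ 2) with (1 - cos T ^ 2) by (simpl; lra).
  field. split; assumption.
Qed.

Lemma cos_atan_pos y : 0 < cos (atan y).
Proof. pose proof (atan_bound y). apply cos_gt_0; lra. Qed.

Lemma sin_atan y : sin (atan y) = y * cos (atan y).
Proof.
  pose proof (cos_atan_pos y). rewrite <- (tan_atan y) at 2. unfold tan. field. lra.
Qed.

Section Model.

Variables alpha lambda : R.
Hypothesis alpha_bounds : 0 < alpha < 1.
Hypothesis lambda_pos : 0 < lambda.

Lemma Cst_pos : 0 < Cst alpha.
Proof.
  unfold Cst. assert (1 < 1 / alpha); [|lra].
  apply (Rmult_lt_reg_r alpha); [lra|]. field_simplify; lra.
Qed.

Lemma alpha_PI_bounds : 0 < alpha * PI < PI.
Proof. pose proof PI_RGT_0. split; nra. Qed.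

Lemma sin_alpha_PI_pos : 0 < sin (alpha * PI).
Proof. pose proof alpha_PI_bounds. apply sin_gt_0; lra. Qed.

Definition theta (u : R) : R := alpha * PI * (1 + Cst alpha * u).

Lemma theta_affine u : theta u = alpha * PI + (PI - alpha * PI) * u.
Proof. unfold theta, Cst. field. lra. Qed.

Lemma sin_theta_pos u : 0 <= u < 1 -> 0 < sin (theta u).
Proof.
  intros Hu. pose proof alpha_PI_bounds. rewrite theta_affine. apply sin_gt_0; nra.
Qed.

Lemma sin_theta_sub_pos u : 0 < u <= 1 -> 0 < sin (theta u - alpha * PI).
Proof.
  intros Hu. pose proof alpha_PI_bounds. rewrite theta_affine. apply sin_gt_0; nra.
Qed.

Lemma sin_theta_nonneg u : 0 <= u <= 1 -> 0 <= sin (theta u).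
Proof.
  intros Hu. pose proof alpha_PI_bounds. rewrite theta_affine. apply sin_ge_0; nra.
Qed.

Lemma sin_theta_sub_nonneg u : 0 <= u <= 1 -> 0 <= sin (theta u - alpha * PI).
Proof.
  intros Hu. pose proof alpha_PI_bounds. rewrite theta_affine. apply sin_ge_0; nra.
Qed.

Definition tau_scale (u : R) : R :=
  Rpower (1 / lambda) (1 / alpha) *
  Rpower ((sin (alpha * PI * (1 + 2 * (Cst alpha * u))) - sin (alpha * PI))
          / sin (2 * alpha * PI * (1 + Cst alpha * u))) (1 / alpha).

Lemma tau_eq u1 u2 : tau alpha lambda u1 u2 = - (tau_scale u1 * ln u2).
Proof. unfold tau, tau_scale. ring. Qed.

Lemma tau_scale_pos u : 0 < tau_scale u.
Proof. apply Rmult_lt_0_compat; apply exp_pos. Qed.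

Lemma tau_gt_iff t u1 u2 : 0 < u2 ->
  tau alpha lambda u1 u2 > t <-> u2 < exp (- (t / tau_scale u1)).
Proof.
  intros Hu2. rewrite tau_eq.
  pose proof (tau_scale_pos u1) as Hk. split; intros H.
  - rewrite <- (exp_ln u2) by easy. apply exp_increasing.
    apply (Rmult_lt_reg_l (tau_scale u1)); [easy|]. field_simplify; lra.
  - rewrite <- (exp_ln u2) in H by easy.
    apply exp_lt_inv, (Rmult_lt_compat_l (tau_scale u1)) in H; [|easy].
    field_simplify in H; lra.
Qed.

Definition cond_survival (t u : R) : R :=
  if excluded_middle_informative (0 < u < 1) then exp (- (t / tau_scale u)) else 0.

Lemma is_RInt_cond_survival t u : 0 <= t ->
  is_RInt (ind2 (fun u1 u2 => tau alpha lambda u1 u2 > t) u) 0 1 (cond_survival t u).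
Proof.
  intros Ht. unfold cond_survival.
  destruct (excluded_middle_informative (0 < u < 1)) as [Hu|Hu].
  - set (c := exp (- (t / tau_scale u))).
    assert (Hc : 0 < c <= 1).
    { pose proof (tau_scale_pos u). split; [apply exp_pos|].
      rewrite <- exp_0. apply exp_le_exp.
      assert (0 <= t / tau_scale u) by (apply Rdiv_le_0_compat; lra). lra. }
    replace c with (c - 0) by ring.
    apply is_RInt_step; [lra| |]; intros x Hx; unfold ind2;
      destruct (excluded_middle_informative _) as [Hin|Hout]; try easy.
    + exfalso. apply Hout. repeat split; try lra. now apply tau_gt_iff; [lra|].
    + exfalso. destruct Hin as (_ & _ & Hin). apply tau_gt_iff in Hin; fold c in Hin; lra.
  - apply (is_RInt_const_on _ _ _ 0); [lra|ring|]. intros x _. unfold ind2.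
    destruct (excluded_middle_informative _) as [Hin|]; [tauto|easy].
Qed.

Definition rate_alpha (u : R) : R := lambda * sin (theta u) / sin (theta u - alpha * PI).

Definition rate (u : R) : R := Rpower (rate_alpha u) (1 / alpha).

Definition survival_integrand (t u : R) : R := exp (- (rate u * t)).

Lemma rate_alpha_pos u : 0 < u < 1 -> 0 < rate_alpha u.
Proof.
  intros Hu.
  pose proof (sin_theta_pos u ltac:(lra)). pose proof (sin_theta_sub_pos u ltac:(lra)).
  apply Rdiv_lt_0_compat; [apply Rmult_lt_0_compat|]; easy.
Qed.

Lemma inv_tau_scale u : 0 < u < 1 -> cos (theta u) <> 0 -> / tau_scale u = rate u.
Proof.
  intros Hu Hc.
  pose proof (sin_theta_pos u ltac:(lra)). pose proof (sin_theta_sub_pos u ltac:(lra)).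
  unfold tau_scale.
  replace (alpha * PI * (1 + 2 * (Cst alpha * u))) with (2 * theta u - alpha * PI)
    by (unfold theta; ring).
  replace (2 * alpha * PI * (1 + Cst alpha * u)) with (2 * theta u) by (unfold theta; ring).
  rewrite sin_2a_sub_ratio, Rpower_mult_distr by (try apply Rdiv_lt_0_compat; lra).
  unfold rate.
  rewrite <- Rpower_Rinv by (apply Rmult_lt_0_compat; apply Rdiv_lt_0_compat; lra).
  f_equal. unfold rate_alpha. field. lra.
Qed.

(* Here [theta = PI / 2]: the formula for [tau] divides by [sin PI = 0], so [tau_scale] is
   not [/ rate] at this single point. *)
Definition u_right_angle : R := (1 / (2 * alpha) - 1) / Cst alpha.

Lemma cos_theta_neq_0 u : 0 < u < 1 -> u <> u_right_angle -> cos (theta u) <> 0.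
Proof.
  intros Hu Hne. pose proof Cst_pos. pose proof alpha_PI_bounds.
  assert (Hperp : theta u_right_angle = PI / 2) by (unfold theta, u_right_angle; field; lra).
  rewrite theta_affine in Hperp.
  destruct (Rlt_or_le u u_right_angle) as [Hlt|Hle].
  - apply Rgt_not_eq, cos_gt_0; rewrite theta_affine; nra.
  - apply Rlt_not_eq, cos_lt_0; rewrite theta_affine; nra.
Qed.

Lemma cond_survival_eq t u : 0 < u < 1 -> u <> u_right_angle ->
  cond_survival t u = survival_integrand t u.
Proof.
  intros Hu Hne. unfold cond_survival, survival_integrand.
  destruct (excluded_middle_informative (0 < u < 1)) as [_|]; [|easy].
  rewrite <- inv_tau_scale by (auto; now apply cos_theta_neq_0).
  pose proof (tau_scale_pos u). f_equal. field. lra.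
Qed.

Lemma prob_tau_gt t I : 0 <= t -> is_RInt (survival_integrand t) 0 1 I ->
  prob_unif2 (fun u1 u2 => tau alpha lambda u1 u2 > t) I.
Proof.
  intros Ht HI. exists (cond_survival t). split.
  - intros u1 _. now apply RInt_is_of_is_RInt, is_RInt_cond_survival.
  - apply RInt_is_of_is_RInt.
    apply (is_RInt_ext_except (survival_integrand t) _ 0 1 u_right_angle); [lra| |exact HI].
    intros u Hu Hne. symmetry. now apply cond_survival_eq.
Qed.

Lemma one_le_inv_alpha : 1 <= 1 / alpha.
Proof. apply (Rmult_le_reg_r alpha); [lra|]. field_simplify; lra. Qed.

Lemma survival_integrand_bound t u : 0 <= t -> Rabs (survival_integrand t u) <= 1.
Proof.
  intros Ht. unfold survival_integrand. rewrite Rabs_pos_eq by (left; apply exp_pos).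
  rewrite <- exp_0. apply exp_le_exp.
  assert (0 < rate u) by apply exp_pos. nra.
Qed.

(* The rate blows up at [u = 0]; its reciprocal [P] stays continuous there. *)
Lemma ex_RInt_survival_integrand_left t : 0 < t -> ex_RInt (survival_integrand t) 0 (1 / 2).
Proof.
  intros Ht.
  set (P u := sin (theta u - alpha * PI) / (lambda * sin (theta u))).
  apply ex_RInt_continuous_ext
    with (fun u => exp_neg_inv t (Rpower0 (1 / alpha) (P u))); [lra| |].
  - intros z Hz. pose proof (sin_theta_pos z ltac:(lra)) as Hs.
    pose proof (sin_theta_sub_nonneg z ltac:(lra)).
    apply (continuous_comp (fun u => Rpower0 (1 / alpha) (P u))).
    + apply continuous_comp.
      * apply (ex_derive_continuous (V := R_NormedModule)). unfold P, theta in *.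
        auto_derive. apply Rgt_not_eq, Rmult_lt_0_compat; easy.
      * apply continuous_Rpower0; [apply one_le_inv_alpha|].
        apply Rdiv_le_0_compat; [easy|]. now apply Rmult_lt_0_compat.
    + apply continuous_exp_neg_inv; [easy|apply Rpower0_nonneg].
  - intros u Hu. pose proof (rate_alpha_pos u ltac:(lra)) as Hq.
    assert (HP : P u = / rate_alpha u).
    { pose proof (sin_theta_pos u ltac:(lra)). pose proof (sin_theta_sub_pos u ltac:(lra)).
      unfold P, rate_alpha. field. lra. }
    rewrite Rpower0_pos, exp_neg_inv_pos by
      (try apply exp_pos; rewrite HP; now apply Rinv_0_lt_compat).
    unfold survival_integrand, rate. rewrite HP, Rpower_Rinv by easy.
    f_equal. field. apply Rgt_not_eq, exp_pos.
Qed.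

Lemma ex_RInt_survival_integrand_right t : ex_RInt (survival_integrand t) (1 / 2) 1.
Proof.
  apply ex_RInt_continuous_ext
    with (fun u => exp (- (Rpower0 (1 / alpha) (rate_alpha u) * t))); [lra| |].
  - intros z Hz. pose proof (sin_theta_sub_pos z ltac:(lra)) as Hs.
    pose proof (sin_theta_nonneg z ltac:(lra)).
    apply (continuous_comp (fun u => Rpower0 (1 / alpha) (rate_alpha u))
             (fun x => exp (- (x * t)))).
    + apply continuous_comp.
      * apply (ex_derive_continuous (V := R_NormedModule)). unfold rate_alpha, theta in *.
        auto_derive. now apply Rgt_not_eq.
      * apply continuous_Rpower0; [apply one_le_inv_alpha|].
        apply Rdiv_le_0_compat; [apply Rmult_le_pos; lra|easy].
    + apply (ex_derive_continuous (V := R_NormedModule)). auto_derive. easy.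
  - intros u Hu. unfold survival_integrand, rate.
    now rewrite Rpower0_pos by (apply rate_alpha_pos; lra).
Qed.

Lemma is_RInt_survival_integrand_0 : is_RInt (survival_integrand 0) 0 1 1.
Proof.
  apply (is_RInt_const_on _ _ _ 1); [lra|ring|]. intros u _.
  unfold survival_integrand. now rewrite Rmult_0_r, Ropp_0, exp_0.
Qed.

Lemma ex_RInt_survival_integrand t : 0 <= t -> ex_RInt (survival_integrand t) 0 1.
Proof.
  intros [Ht|<-].
  - apply (ex_RInt_Chasles _ 0 (1 / 2) 1).
    + now apply ex_RInt_survival_integrand_left.
    + apply ex_RInt_survival_integrand_right.
  - exists 1. apply is_RInt_survival_integrand_0.
Qed.

Definition cot_theta_of (s : R) : R :=
  (cos (alpha * PI) - lambda / Rpower s alpha) / sin (alpha * PI).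

Definition rate_inv (s : R) : R :=
  ((PI / 2 - atan (cot_theta_of s)) / (alpha * PI) - 1) / Cst alpha.

Lemma theta_rate_inv s : theta (rate_inv s) = PI / 2 - atan (cot_theta_of s).
Proof.
  pose proof Cst_pos. pose proof alpha_PI_bounds.
  unfold theta, rate_inv. field. lra.
Qed.

Lemma rate_rate_inv s : 0 < s -> rate (rate_inv s) = s.
Proof.
  intros Hs. pose proof sin_alpha_PI_pos. pose proof (exp_pos (alpha * ln s)) as Hx.
  unfold rate, rate_alpha. rewrite theta_rate_inv.
  rewrite (sin_minus (PI / 2 - atan (cot_theta_of s))), sin_shift, cos_shift, sin_atan.
  pose proof (cos_atan_pos (cot_theta_of s)).
  set (c := cos (atan (cot_theta_of s))) in *.
  replace (c * cos (alpha * PI) - cot_theta_of s * c * sin (alpha * PI))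
    with (c * (lambda / Rpower s alpha)) by (unfold cot_theta_of, Rpower in *; field; lra).
  replace (lambda * c / (c * (lambda / Rpower s alpha))) with (Rpower s alpha)
    by (unfold Rpower in *; field; lra).
  replace (1 / alpha) with (/ alpha) by (field; lra).
  apply Rpower_Rpower_inv; lra.
Qed.

Lemma rate_inv_rate u : 0 < u < 1 -> rate_inv (rate u) = u.
Proof.
  intros Hu. pose proof Cst_pos. pose proof alpha_PI_bounds. pose proof sin_alpha_PI_pos.
  pose proof (sin_theta_pos u ltac:(lra)). pose proof (sin_theta_sub_pos u ltac:(lra)).
  assert (Hcot : cot_theta_of (rate u) = tan (PI / 2 - theta u)).
  { unfold cot_theta_of, rate.
    replace (1 / alpha) with (/ alpha) by (field; lra).
    rewrite Rpower_mult, Rinv_l, Rpower_1 by (try apply rate_alpha_pos; lra).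
    unfold tan, rate_alpha. rewrite sin_shift, cos_shift.
    rewrite sin_minus in *. field. lra. }
  assert (Htheta : alpha * PI < theta u < PI) by (rewrite theta_affine; nra).
  unfold rate_inv. rewrite Hcot, atan_tan by lra.
  unfold theta. field. lra.
Qed.

Lemma rate_inv_bounds s : 0 < s -> 0 < rate_inv s < 1.
Proof.
  intros Hs. pose proof Cst_pos. pose proof alpha_PI_bounds. pose proof sin_alpha_PI_pos.
  assert (Hcot : cot_theta_of s < tan (PI / 2 - alpha * PI)).
  { unfold tan. rewrite sin_shift, cos_shift. unfold cot_theta_of.
    assert (0 < lambda / Rpower s alpha) by (apply Rdiv_lt_0_compat; [lra|apply exp_pos]).
    apply Rmult_lt_compat_r; [now apply Rinv_0_lt_compat|lra]. }
  apply atan_increasing in Hcot. rewrite atan_tan in Hcot by lra.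
  pose proof (atan_bound (cot_theta_of s)).
  pose proof (theta_rate_inv s) as Htheta. rewrite theta_affine in Htheta.
  split; nra.
Qed.

Lemma rate_inv_decreasing s1 s2 : 0 < s1 < s2 -> rate_inv s2 < rate_inv s1.
Proof.
  intros Hs. pose proof alpha_PI_bounds. pose proof sin_alpha_PI_pos.
  assert (Hcot : cot_theta_of s1 < cot_theta_of s2).
  { assert (Rpower s1 alpha < Rpower s2 alpha) by (apply Rlt_Rpower_l; lra).
    unfold cot_theta_of. apply Rmult_lt_compat_r; [now apply Rinv_0_lt_compat|].
    apply Rplus_lt_compat_l, Ropp_lt_contravar, Rmult_lt_compat_l; [lra|].
    apply Rinv_lt_contravar; [apply Rmult_lt_0_compat; apply exp_pos|easy]. }
  apply atan_increasing in Hcot.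
  pose proof (theta_rate_inv s1) as H1. pose proof (theta_rate_inv s2) as H2.
  rewrite theta_affine in H1, H2. nra.
Qed.

Lemma W_plus_denom_eq s :
  Rpower s (2 * alpha) - 2 * lambda * Rpower s alpha * cos (alpha * PI) + lambda ^ 2
  = (sin (alpha * PI) * Rpower s alpha) ^ 2 * (1 + cot_theta_of s ^ 2).
Proof.
  pose proof sin_alpha_PI_pos. pose proof (exp_pos (alpha * ln s)).
  replace (2 * alpha) with (alpha + alpha) by ring. rewrite Rpower_plus.
  transitivity ((sin (alpha * PI) * Rpower s alpha) ^ 2
                + (cos (alpha * PI) * Rpower s alpha - lambda) ^ 2).
  - pose proof (sin2_cos2 (alpha * PI)) as Hsc. unfold Rsqr in Hsc.
    rewrite <- (Rmult_1_r (Rpower s alpha * Rpower s alpha)), <- Hsc. ring.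
  - unfold cot_theta_of, Rpower in *. field. lra.
Qed.

Lemma W_plus_denom_pos s :
  0 < Rpower s (2 * alpha) - 2 * lambda * Rpower s alpha * cos (alpha * PI) + lambda ^ 2.
Proof.
  rewrite W_plus_denom_eq. pose proof sin_alpha_PI_pos. pose proof (exp_pos (alpha * ln s)).
  apply Rmult_lt_0_compat; [apply pow_lt; now apply Rmult_lt_0_compat|].
  pose proof (pow2_ge_0 (cot_theta_of s)). lra.
Qed.

Lemma is_derive_rate_inv s : 0 < s -> is_derive rate_inv s (- W_plus alpha lambda s).
Proof.
  intros Hs. pose proof Cst_pos. pose proof alpha_PI_bounds. pose proof sin_alpha_PI_pos.
  assert (Hpred : Rpower s (alpha - 1) = Rpower s alpha / s).
  { unfold Rminus. rewrite Rpower_plus, Rpower_Ropp, Rpower_1 by easy. reflexivity. }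
  unfold W_plus. rewrite W_plus_denom_eq, Hpred.
  unfold rate_inv, cot_theta_of, Rpower in *. auto_derive.
  - repeat split; try easy. apply Rgt_not_eq, exp_pos.
  - field. repeat split; try lra; [apply Rgt_not_eq, exp_pos|].
    apply Rgt_not_eq, Rplus_lt_le_0_compat; [|apply pow2_ge_0].
    apply pow_lt, Rmult_lt_0_compat; [apply exp_pos|easy].
Qed.

Lemma continuous_W_plus s : 0 < s -> continuous (W_plus alpha lambda) s.
Proof.
  intros Hs. pose proof Cst_pos. pose proof (W_plus_denom_pos s).
  apply (ex_derive_continuous (V := R_NormedModule)).
  unfold W_plus, Rpower in *. auto_derive. repeat split; lra.
Qed.

Lemma continuous_survival_integrand t u : 0 < u < 1 -> continuous (survival_integrand t) u.
Proof.
  intros Hu. pose proof (rate_alpha_pos u Hu) as Hq.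
  pose proof (sin_theta_sub_pos u ltac:(lra)) as Hs.
  apply (ex_derive_continuous (V := R_NormedModule)).
  unfold survival_integrand, rate, rate_alpha, theta, Rpower in *.
  auto_derive. split; [now apply Rgt_not_eq|split; [exact Hq|easy]].
Qed.

Lemma is_RInt_W_plus_exp t a b : 0 < a < b ->
  is_RInt (fun s => W_plus alpha lambda s * exp (- (s * t))) a b
    (RInt (survival_integrand t) (rate_inv b) (rate_inv a)).
Proof.
  intros Hab.
  pose proof (rate_inv_bounds a ltac:(lra)). pose proof (rate_inv_bounds b ltac:(lra)).
  assert (Hsub := is_RInt_comp (survival_integrand t) rate_inv
                    (fun s => - W_plus alpha lambda s) a b).
  rewrite Rmin_left, Rmax_right in Hsub by lra.
  assert (Hex : ex_RInt (survival_integrand t) (rate_inv a) (rate_inv b)).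
  { apply (ex_RInt_continuous (V := R_CompleteNormedModule)). intros z Hz.
    apply continuous_survival_integrand. split.
    - eapply Rlt_le_trans; [|apply Hz]. apply Rmin_glb_lt; lra.
    - eapply Rle_lt_trans; [apply Hz|]. apply Rmax_lub_lt; lra. }
  rewrite <- (opp_RInt_swap (V := R_CompleteNormedModule) _ _ _ Hex).
  apply (is_RInt_ext (V := R_NormedModule)
           (fun s => opp (scal (- W_plus alpha lambda s)
                              (survival_integrand t (rate_inv s))))).
  - rewrite Rmin_left, Rmax_right by lra. intros s Hs.
    unfold survival_integrand. rewrite rate_rate_inv by lra.
    unfold opp, scal; simpl; unfold mult; simpl. ring.
  - apply (is_RInt_opp (V := R_NormedModule)), Hsub.
    + intros s Hs. apply continuous_survival_integrand, rate_inv_bounds. lra.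
    + intros s Hs. split; [apply is_derive_rate_inv; lra|].
      apply (continuous_opp (V := R_NormedModule)), continuous_W_plus. lra.
Qed.

Lemma improper_int_W_plus_exp t I : 0 <= t -> is_RInt (survival_integrand t) 0 1 I ->
  improper_int_0_inf (fun s => W_plus alpha lambda s * exp (- (s * t))) I.
Proof.
  intros Ht HI. apply (improper_int_0_inf_change (survival_integrand t) _ rate_inv rate I HI).
  - intros u. now apply survival_integrand_bound.
  - exact rate_inv_bounds.
  - exact rate_inv_decreasing.
  - intros u _. apply exp_pos.
  - exact rate_inv_rate.
  - exact (is_RInt_W_plus_exp t).
Qed.

End Model.

Theorem mainTheorem4 (alpha lambda : R) (Ha : 0 < alpha < 1) (Hl : 0 < lambda) :
  prob_unif2 (fun u1 u2 => tau alpha lambda u1 u2 > 0) 1 /\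
  (forall t, 0 <= t ->
     exists L,
       improper_int_0_inf (fun s => W_plus alpha lambda s * exp (- (s * t))) L /\
       prob_unif2 (fun u1 u2 => tau alpha lambda u1 u2 > t) L).
Proof.
  split.
  - apply (prob_tau_gt alpha lambda Ha Hl 0 1 (Rle_refl 0)).
    apply is_RInt_survival_integrand_0.
  - intros t Ht.
    destruct (ex_RInt_survival_integrand alpha lambda Ha Hl t Ht) as [I HI].
    exists I. split.
    + exact (improper_int_W_plus_exp alpha lambda Ha Hl t I Ht HI).
    + exact (prob_tau_gt alpha lambda Ha Hl t I Ht HI).
Qed.
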